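(* Let $[\mathbf{T},\mathbf{o}]$ be a unimodular random rooted Family Tree. Then the distribution of $[\mathbf{T},\mathbf{o}]$ is completely determined by the distribution of the descendant tree $[D(\mathbf{o}),\mathbf{o}]$ of its root.
   Context: A Family Tree is a locally finite directed tree in which every vertex has out-degree at most one (the out-neighbour is the parent). $D(\mathbf{o})$ is the subtree of $\mathbf{o}$ and all vertices having a directed path to $\mathbf{o}$, rooted at $\mathbf{o}$. A random rooted network $[\mathbf{G},\mathbf{o}]$ is unimodular if $\mathbb{E}[\sum_{u\in V(\mathbf{G})}h([\mathbf{G},\mathbf{o},u])]=\mathbb{E}[\sum_{u\in V(\mathbf{G})}h([\mathbf{G},u,\mathbf{o}])]$ for every measurable $h\ge0$ on isomorphism classes of doubly rooted networks. *)

From HB Require Import structures.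
From mathcomp Require Import all_boot all_order all_algebra.
From mathcomp Require Import all_classical all_reals all_analysis.
From mathcomp Require Import measurable_realfun.
Set Implicit Arguments. Unset Strict Implicit. Unset Printing Implicit Defensive.
Import Order.TTheory GRing.Theory Num.Theory.
Local Open Scope classical_set_scope.
Local Open Scope ereal_scope.

(* A (representative of a) rooted network whose underlying graph is a
   directed graph with out-degree <= 1: vertex set [vset] (a set of naturals;
   locally finite connected graphs are countable), parent map [par]
   (the out-neighbour), and root [root]. *)
Record rnet := RNet { vset : set nat; par : nat -> option nat; root : nat }.

Definition adj (G : rnet) (u v : nat) : Prop :=
  vset G u /\ vset G v /\ (par G u = Some v \/ par G v = Some u).

Fixpoint within (G : rnet) (r : nat) (o v : nat) : Prop :=
  match r with
  | 0 => v = o /\ vset G o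
  | r'.+1 => within G r' o v \/ exists w, within G r' o w /\ adj G w v
  end.

Definition ball_iso (G : rnet) (o : nat) (H : rnet) (p : nat) (r : nat)
  (f : nat -> nat) : Prop :=
  exists g : nat -> nat,
    (forall v, within G r o v -> within H r p (f v) /\ g (f v) = v) /\
    (forall w, within H r p w -> within G r o (g w) /\ f (g w) = w) /\
    f o = p /\
    (forall u v, within G r o u -> within G r o v ->
       (par G u = Some v <-> par H (f u) = Some (f v))).

(* generators of the Borel sigma-algebra of the local topology on rooted
   networks: "the r-ball around the root is isomorphic to that of H" *)
Definition rnet_gen : set (set rnet) :=
  [set A | exists (H : rnet) (r : nat),
     A = [set G | exists f, ball_iso G (root G) H (root H) r f]].

Definition rnet_meas : set (set rnet) := <<s rnet_gen>>.

(* doubly rooted networks [G, o, v] : (G with root o, v) *)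
Definition rnet2 := (rnet * nat)%type.

Definition rnet2_gen : set (set rnet2) :=
  [set A | exists (H : rnet) (q r : nat),
     A = [set x | within x.1 r (root x.1) x.2 /\
                  exists f, ball_iso x.1 (root x.1) H (root H) r f /\ f x.2 = q]].

Definition rnet2_meas : set (set rnet2) := <<s rnet2_gen>>.

Definition reroot (G : rnet) (u : nat) : rnet := RNet (vset G) (par G) u.

Definition swap2 (x : rnet2) : rnet2 := (reroot x.1 x.2, root x.1).

Fixpoint anc (G : rnet) (k : nat) (v : nat) : option nat :=
  match k with
  | 0 => Some v
  | k'.+1 => obind (par G) (anc G k' v)
  end.

Definition is_family_tree (G : rnet) : Prop :=
  vset G (root G) /\
  (forall v w, vset G v -> par G v = Some w -> vset G w) /\
  (forall v k, vset G v -> (0 < k)%N -> anc G k v <> Some v) /\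
  (forall v, vset G v -> finite_set [set w | vset G w /\ par G w = Some v]) /\
  (forall v, vset G v -> exists r, within G r (root G) v).

Definition is_desc (G : rnet) (o v : nat) : Prop := exists k, anc G k v = Some o.

Definition desc_tree (G : rnet) : rnet :=
  RNet [set v | vset G v /\ is_desc G (root G) v]
       (fun v => if v == root G then None else par G v) (root G).

Definition unimodular_rft (R : realType) (d : measure_display)
  (Omega : measurableType d) (P : probability Omega R) (X : Omega -> rnet) : Prop :=
  (forall w, is_family_tree (X w)) /\
  (forall A, rnet_meas A -> measurable (X @^-1` A)) /\
  (forall h : rnet2 -> \bar R, (forall x, 0 <= h x) ->
     (forall B : set (\bar R), measurable B -> rnet2_meas (h @^-1` B)) ->
     \int[P]_w (esum (vset (X w)) (fun u => h (X w, u))) =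
     \int[P]_w (esum (vset (X w)) (fun u => h (swap2 (X w, u))))).

From HB Require Import structures.
From mathcomp Require Import all_boot all_order all_algebra.
From mathcomp Require Import all_classical all_reals all_analysis.
From mathcomp Require Import measurable_realfun zify.
Set Implicit Arguments. Unset Strict Implicit. Unset Printing Implicit Defensive.
Local Open Scope classical_set_scope.

(* Write B_r(T, v) ~ H when the r-ball around v in T is isomorphic to the
   r-ball around the root of H. The events {B_r(T, o) ~ H}, together with the
   empty set, form a pi-system generating the sigma-algebra, so it suffices to
   show that their probabilities are determined by the law of D(o).
   Let a_k be the k-th ancestor of the root o. Climbing r steps up the
   ancestral line, or up to its top a_J if it is shorter, B_r(T, o) becomes
   B_r(D(a_J), o). Hence the indicator of {B_r(T, o) ~ H} telescopes into the
   indicators of "a_k exists and B_r(D(a_k), o) ~ H" minus those of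
   "a_k has a parent and B_r(D(a_k), o) ~ H". By unimodularity (mass transport
   from o to a_k), the probability of each of these events is the mean number
   of descendants u of o, k generations below o (resp. k + 1 generations below
   o, through a child a of o), such that B_r(D(o), u) ~ H (resp.
   B_r(D(a), u) ~ H): the expectation of a measurable function of D(o). *)

(** * Paths and ancestors *)

Definition parent_closed (G : rnet) :=
  forall v w, vset G v -> par G v = Some w -> vset G w.

Definition acyclic (G : rnet) :=
  forall v k, vset G v -> (0 < k)%N -> anc G k v <> Some v.

Record family_forest (G : rnet) : Prop := FamilyForest {
  forest_root : vset G (root G);
  forest_parent_closed : parent_closed G;
  forest_acyclic : acyclic G;
  forest_locally_finite : forall v, vset G v ->
    finite_set [set w | vset G w /\ par G w = Some v] }.

Lemma family_tree_forest G : is_family_tree G -> family_forest G.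
Proof. by case=> h1 [h2 [h3 [h4 _]]]; constructor. Qed.

Lemma within_vset G r o v : within G r o v -> vset G v.
Proof.
elim: r v => [|r IH] v /=; first by case=> ->.
by case=> [/IH //|[w [_ [_ [? _]]]]].
Qed.

Lemma within_center G r o v : within G r o v -> vset G o.
Proof.
elim: r v => [|r IH] v /=; first by case.
by case=> [/IH //|[w [/IH ? _]]].
Qed.

Lemma within_mono G r s o v : (r <= s)%N -> within G r o v -> within G s o v.
Proof.
move=> /subnK <-; elim: (s - r)%N => [|n IH] // h.
by rewrite addSn; left; exact: IH.
Qed.

Lemma within_refl G r o : vset G o -> within G r o o.
Proof. by move=> h; apply: (@within_mono G 0). Qed.

Lemma adj_sym G u v : adj G u v -> adj G v u.
Proof. by case=> a [b [c|c]]; split=> //; split=> //; [right|left]. Qed.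

Lemma within_trans G r s o u v :
  within G r o u -> within G s u v -> within G (r + s) o v.
Proof.
move=> hu; elim: s v => [|s IH] v /=; first by case=> -> _; rewrite addn0.
rewrite addnS; case=> [/IH h|[w [/IH h1 h2]]]; first by left.
by right; exists w.
Qed.

Lemma within_sym G r o v : within G r o v -> within G r v o.
Proof.
elim: r v => [|r IH] v /=; first by case=> -> ?; split.
case=> [/IH h|[w [/IH h1 h2]]]; first by left.
have h3 : within G 1 v w.
  by right; exists v; split; [split=> //; case: h2 => _ []|exact: adj_sym].
by have := within_trans h3 h1; rewrite add1n.
Qed.

Lemma within_subgraph G G' t u v : (forall x, vset G x -> vset G' x) ->
  (forall x y, vset G x -> par G x = Some y -> par G' x = Some y) ->
  within G t u v -> within G' t u v.
Proof.
move=> hv hp; elim: t v => [|t IH] v /=; first by case=> -> /hv.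
case=> [/IH|[w [/IH h [a [b c]]]]]; first by left.
right; exists w; split=> //; split; first exact: hv.
by split; [exact: hv|case: c => c; [left|right]; apply: hp].
Qed.

Lemma eq_within G G' t u v : (forall x, vset G x <-> vset G' x) ->
  (forall x, vset G x -> par G x = par G' x) ->
  within G t u v <-> within G' t u v.
Proof.
move=> hv hp; split; apply: within_subgraph.
- by move=> x /hv.
- by move=> x y /hp ->.
- by move=> x /hv.
- by move=> x y /hv /hp ->.
Qed.

Lemma ancD G m n v : anc G (m + n) v = obind (anc G m) (anc G n v).
Proof.
elim: m => [|m IH] /=; first by case: (anc G n v).
by rewrite IH; case: (anc G n v).
Qed.

Lemma ancS G k v : anc G k.+1 v = obind (anc G k) (par G v).
Proof. by rewrite -addn1 ancD. Qed.

Lemma anc_sub G G' k v w : (forall x y, par G x = Some y -> par G' x = Some y) ->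
  anc G k v = Some w -> anc G' k v = Some w.
Proof.
move=> hp; elim: k w => [|k IH] w //=.
by case e: (anc G k v) => [b|] //= hb; rewrite (IH _ e) /=; apply: hp.
Qed.

Lemma anc_reroot G a k v : anc (reroot G a) k v = anc G k v.
Proof.
elim: k => [|k IH] //=; rewrite IH.
by case: (anc G k v).
Qed.

Lemma anc_vset G k v w : parent_closed G -> vset G v -> anc G k v = Some w ->
  vset G w.
Proof.
move=> pc; elim: k w => [|k IH] w /=; first by move=> ? [<-].
by case e: (anc G k v) => [b|] //= hv hb; exact: pc (IH _ hv e) hb.
Qed.

Lemma anc_within G k v w : parent_closed G -> vset G v -> anc G k v = Some w ->
  within G k v w.
Proof.
move=> pc hv; elim: k w => [|k IH] w /=; first by case=> <-.
case e: (anc G k v) => [b|] //= hb; right; exists b; split; first exact: IH.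
have vb := anc_vset pc hv e.
by split=> //; split; [exact: pc hb|left].
Qed.

Lemma within_common_anc G r o v : within G r o v ->
  exists i m c, (i + m <= r)%N /\ anc G i o = Some c /\ anc G m v = Some c.
Proof.
elim: r v => [|r IH] v /=; first by case=> -> _; exists 0%N, 0%N, o.
case=> [/IH [i [m [c [h1 [h2 h3]]]]]|
        [w [/IH [i [m [c [h1 [h2 h3]]]]] [_ [_ [hp|hp]]]]]].
- by exists i, m, c; split=> //; lia.
- case: m h1 h3 => [|m] h1 h3.
    move: h3 => /= [ec]; subst w.
    by exists i.+1, 0%N, v; split; [lia|rewrite /= h2].
  by exists i, m, c; split; [lia|move: h3; rewrite ancS hp].
- by exists i, m.+1, c; split; [lia|rewrite ancS hp].
Qed.

Lemma anc_above_top G J o a m : anc G J o = Some a -> par G a = None ->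
  (J < m)%N -> anc G m o = None.
Proof.
move=> hJ hp lt; have := ancD G (m - J.+1) J.+1 o.
by rewrite subnK // /= hJ /= hp.
Qed.

Lemma par_not_desc G a w m : acyclic G -> vset G a ->
  anc G m w = Some a -> par G a = Some w -> False.
Proof. by move=> ac va hm hp; apply: (ac a m.+1 va) => //; rewrite ancS hp. Qed.

(** * Isomorphisms of balls *)

Definition ball_bij (G : rnet) (o : nat) (H : rnet) (p : nat) (r : nat)
  (f g : nat -> nat) : Prop :=
    (forall v, within G r o v -> within H r p (f v) /\ g (f v) = v) /\
    (forall w, within H r p w -> within G r o (g w) /\ f (g w) = w) /\
    f o = p /\
    (forall u v, within G r o u -> within G r o v ->
       (par G u = Some v <-> par H (f u) = Some (f v))).

Definition ball_hom (G : rnet) (o : nat) (H : rnet) (p : nat) (r : nat)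
  (f : nat -> nat) :=
  (forall v, within G r o v -> within H r p (f v)) /\
  (vset G o -> f o = p) /\
  (forall u v, within G r o u -> within G r o v -> par G u = Some v ->
     par H (f u) = Some (f v)).

Lemma ball_hom_within G o H p R f s v : ball_hom G o H p R f -> (s <= R)%N ->
  within G s o v -> within H s p (f v).
Proof.
move=> [h1 [h2 h3]]; elim: s v => [|s IH] v sR /=.
  case=> -> vo; rewrite h2 //; split=> //.
  by have := h1 o (within_refl R vo); rewrite h2 // => /within_vset.
case=> [hh|[w [hw [vw [vv hp]]]]]; first by left; apply: IH => //; lia.
right; exists (f w); split; first by apply: IH => //; lia.
have wR : within G R o w by apply: within_mono hw; lia.
have vR : within G R o v.
  by apply: (within_mono sR); right; exists w; split=> //; split.
split; first exact: within_vset (h1 _ wR).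
split; first exact: within_vset (h1 _ vR).
by case: hp => hp; [left|right]; apply: h3.
Qed.

Lemma ball_hom_anc G o G' o' R f s k u a : ball_hom G o G' o' R f ->
  parent_closed G -> within G s o u -> (s + k <= R)%N ->
  anc G k u = Some a -> anc G' k (f u) = Some (f a).
Proof.
move=> hf pc hu; elim: k a => [|k IH] a skR /=; first by case=> <-.
case e: (anc G k u) => [b|] //= hb.
rewrite (IH b _ e) /=; last by lia.
have wb : within G (s + k) o b := within_trans hu (anc_within pc (within_vset hu) e).
have wa : within G (s + k).+1 o a.
  right; exists b; split=> //; split; first exact: within_vset wb.
  by split; [exact: pc (within_vset wb) hb|left].
case: hf => _ [_ h3]; apply: h3 => //; apply: within_mono wb || apply: within_mono wa; lia.
Qed.

Lemma ball_bij_center G o H p R f g : ball_bij G o H p R f g -> f o = p.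
Proof. by case=> _ [_ []]. Qed.

Lemma ball_bij_hom G o H p R f g : ball_bij G o H p R f g -> ball_hom G o H p R f.
Proof.
move=> [h1 [h2 [h3 h4]]]; split; first by move=> v /h1 [].
by split=> // u v hu hv; exact: (h4 u v hu hv).1.
Qed.

Lemma ball_bij_hom_inv G o H p R f g : ball_bij G o H p R f g -> ball_hom H p G o R g.
Proof.
move=> [h1 [h2 [h3 h4]]]; split; first by move=> v /h2 [].
split.
  move=> vp; have /h2 [wg _] := within_refl R vp.
  by have /h1 [_ <-] := within_refl R (within_center wg); rewrite h3.
move=> u v hu hv hp; have [gu fu] := h2 _ hu; have [gv fv] := h2 _ hv.
by apply/(h4 _ _ gu gv); rewrite fu fv.
Qed.

Lemma ball_bij_restrict G o H p R f g s : (s <= R)%N ->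
  ball_bij G o H p R f g -> ball_bij G o H p s f g.
Proof.
move=> sR B; have hf := ball_bij_hom B; have hg := ball_bij_hom_inv B.
case: B => [h1 [h2 [h3 h4]]]; split.
  move=> v hv; split; first exact: ball_hom_within hf sR hv.
  by case: (h1 v (within_mono sR hv)).
split.
  move=> w hw; split; first exact: ball_hom_within hg sR hw.
  by case: (h2 w (within_mono sR hw)).
by split=> // u v hu hv; apply: h4; exact: within_mono hu || exact: within_mono hv.
Qed.

Lemma ball_bij_sym G o H p R f g : ball_bij G o H p R f g ->
  exists g', ball_bij H p G o R g' f.
Proof.
move=> B; case: (pselect (vset G o)) => vo.
  have hg := ball_bij_hom_inv B; case: B => [h1 [h2 [h3 h4]]].
  exists g; split=> //; split=> //; split.
    by case: (h1 _ (within_refl R vo)); rewrite h3.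
  move=> u v hu hv; have [gu fu] := h2 _ hu; have [gv fv] := h2 _ hv.
  by rewrite (h4 _ _ gu gv) fu fv.
exists (fun=> o); case: B => [h1 [h2 [h3 h4]]].
split; first by move=> w /h2 [/within_center].
split; first by move=> v /within_center.
by split=> // u v /h2 [/within_center].
Qed.

Lemma ball_bij_comp G o H p K q R f g f' g' : ball_bij G o H p R f g ->
  ball_bij H p K q R f' g' -> ball_bij G o K q R (f' \o f) (g \o g').
Proof.
move=> [h1 [h2 [h3 h4]]] [k1 [k2 [k3 k4]]]; split.
  by move=> v /h1 [/k1 [a b] c]; split=> //=; rewrite b.
split; first by move=> w /k2 [/h2 [a b] c]; split=> //=; rewrite b.
split; first by rewrite /= h3.
move=> u v hu hv; rewrite (h4 _ _ hu hv); apply: k4.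
  by case: (h1 _ hu).
by case: (h1 _ hv).
Qed.

Lemma ball_iso_sym G o H p R f : ball_iso G o H p R f ->
  exists f', ball_iso H p G o R f'.
Proof. by move=> [g /ball_bij_sym [g' B]]; exists g', f. Qed.

Lemma ball_iso_comp G o H p K q R f f' : ball_iso G o H p R f ->
  ball_iso H p K q R f' -> ball_iso G o K q R (f' \o f).
Proof. by move=> [g B] [g' B']; exists (g \o g'); exact: ball_bij_comp B B'. Qed.

Lemma ball_iso_restrict G o H p R f s : (s <= R)%N ->
  ball_iso G o H p R f -> ball_iso G o H p s f.
Proof. by move=> sR [g B]; exists g; exact: ball_bij_restrict B. Qed.

Lemma ball_iso_congr G G' o H p r f :
  (forall v, within G r o v <-> within G' r o v) ->
  (forall u v, within G r o u -> within G r o v ->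
     (par G u = Some v <-> par G' u = Some v)) ->
  ball_iso G o H p r f -> ball_iso G' o H p r f.
Proof.
move=> hw hp [g [h1 [h2 [h3 h4]]]]; exists g; split; first by move=> v /hw /h1.
split; first by move=> w /h2 [/hw].
by split=> // u v /hw hu /hw hv; rewrite -(hp _ _ hu hv); exact: h4.
Qed.

Lemma eq_ball_iso G G' o H p r f : (forall x, vset G x <-> vset G' x) ->
  (forall x, vset G x -> par G x = par G' x) ->
  ball_iso G o H p r f <-> ball_iso G' o H p r f.
Proof.
move=> hv hp; have he t u v := eq_within t u v hv hp.
split; apply: ball_iso_congr => //.
- by move=> u v /within_vset /hp ->.
- by move=> v; rewrite he.
- by move=> u v /within_vset /hv /hp ->.
Qed.

(** * Descendant trees *)

Definition desc_at (G : rnet) (a : nat) := desc_tree (reroot G a).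

Lemma vset_desc_at G a v :
  vset (desc_at G a) v <-> vset G v /\ exists k, anc G k v = Some a.
Proof.
rewrite /desc_at /desc_tree /= /is_desc.
by split; case=> h [k hk]; split=> //; exists k; rewrite ?anc_reroot // -(anc_reroot G a).
Qed.

Lemma par_desc_at G a v : par (desc_at G a) v = if v == a then None else par G v.
Proof. by []. Qed.

Lemma within_desc_at G a t u v : within (desc_at G a) t u v -> within G t u v.
Proof.
apply: within_subgraph; first by move=> x /vset_desc_at [].
by move=> x y _; rewrite par_desc_at; case: (x == a).
Qed.

Lemma desc_par G a w p k : anc G k w = Some a -> w <> a -> par G w = Some p ->
  exists k', anc G k' p = Some a.
Proof. by case: k => [[/esym]//|k]; rewrite ancS => + _ hp; rewrite hp; exists k. Qed.

Lemma ball_hom_adj_desc_at G o G' o' R f a w v : ball_hom G o G' o' R f ->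
  within G R o w -> within G R o v ->
  (forall x, within G R o x -> f x = f a -> x = a) ->
  vset (desc_at G' (f a)) (f w) -> adj (desc_at G a) w v ->
  adj (desc_at G' (f a)) (f w) (f v).
Proof.
move=> hf wRw wRv inj /[dup] dw /vset_desc_at [_ [kw hkw]] [_ [_ hp]].
have vfv : vset G' (f v) by exact: within_vset (proj1 hf _ wRv).
have ne x : within G R o x -> x <> a -> f x <> f a by move=> hx ne /(inj _ hx).
rewrite !par_desc_at in hp; case: hp => hp.
- case: eqP hp => // wa hp.
  have pf := proj2 (proj2 hf) _ _ wRw wRv hp.
  split=> //; split; last by left; rewrite par_desc_at; case: eqP (ne _ wRw wa).
  by apply/vset_desc_at; split=> //; exact: desc_par hkw (ne _ wRw wa) pf.
- case: eqP hp => // va hp.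
  have pf := proj2 (proj2 hf) _ _ wRv wRw hp.
  split=> //; split; last by right; rewrite par_desc_at; case: eqP (ne _ wRv va).
  by apply/vset_desc_at; split=> //; exists kw.+1; rewrite ancS pf.
Qed.

(* The injectivity hypothesis at [a] is needed because [desc_at] cuts the
   parent edge of [a]. *)
Lemma ball_hom_desc_at G o G' o' R f s k r u a :
  ball_hom G o G' o' R f -> parent_closed G -> within G s o u ->
  anc G k u = Some a -> (s + k <= R)%N -> (s + r <= R)%N ->
  (forall v, within G R o v -> f v = f a -> v = a) ->
  forall v, within (desc_at G a) r u v -> within (desc_at G' (f a)) r (f u) (f v).
Proof.
move=> hf pc hu hk skR srR inj; elim: r srR => [|r IH] srR v /=.
  case=> -> /vset_desc_at [vu _]; split=> //; apply/vset_desc_at; split.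
    by apply: within_vset (proj1 hf _ _); apply: within_mono hu; lia.
  by exists k; apply: ball_hom_anc hf pc hu skR hk.
have wR t x : (t <= r.+1)%N -> within (desc_at G a) t u x -> within G R o x.
  move=> tr /within_desc_at hx; apply: (@within_mono _ (s + t)); first lia.
  exact: within_trans hu hx.
have srR' : (s + r <= R)%N by lia.
case=> [h|[w [hw hadj]]]; first by left; exact: IH.
have hw' := IH srR' w hw.
have wRv : within G R o v by apply: (wR r.+1) => //; right; exists w.
right; exists (f w); split=> //.
exact: ball_hom_adj_desc_at hf (wR r w (leqnSn r) hw) wRv inj (within_vset hw') hadj.
Qed.

Lemma ball_bij_desc_at G o G' o' R f g s k r u a : ball_bij G o G' o' R f g ->
  parent_closed G -> parent_closed G' ->
  within G s o u -> anc G k u = Some a -> (s + k <= R)%N -> (s + r <= R)%N ->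
  ball_bij (desc_at G a) u (desc_at G' (f a)) (f u) r f g.
Proof.
move=> B pc pc' hu hk skR srR.
have hf := ball_bij_hom B; have hg := ball_bij_hom_inv B.
have wa : within G R o a.
  apply: (@within_mono _ (s + k)) => //.
  exact: within_trans hu (anc_within pc (within_vset hu) hk).
case: (B) => [h1 [h2 [h3 h4]]].
have gfa : g (f a) = a by case: (h1 _ wa).
have gfu : g (f u) = u by case: (h1 u); [apply: within_mono hu; lia|].
have hu' : within G' s o' (f u) by apply: ball_hom_within hf _ hu; lia.
have hk' := ball_hom_anc hf pc hu skR hk.
have wR x : within (desc_at G a) r u x -> within G R o x.
  move=> /within_desc_at hx; apply: (@within_mono _ (s + r)) => //.
  exact: within_trans hu hx.
have wR' x : within (desc_at G' (f a)) r (f u) x -> within G' R o' x.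
  move=> /within_desc_at hx; apply: (@within_mono _ (s + r)) => //.
  exact: within_trans hu' hx.
have injf v : within G R o v -> f v = f a -> v = a.
  by move=> hv e; have [_ <-] := h1 _ hv; rewrite e gfa.
have injg w : within G' R o' w -> g w = g (f a) -> w = f a.
  by move=> hw e; have [_ <-] := h2 _ hw; rewrite e gfa.
split.
  move=> v hv; split; first exact: ball_hom_desc_at hf pc hu hk skR srR injf v hv.
  by case: (h1 _ (wR v hv)).
split.
  move=> w hw; split; last by case: (h2 _ (wR' w hw)).
  by have := ball_hom_desc_at hg pc' hu' hk' skR srR injg hw; rewrite gfa gfu.
split=> // x y /wR hx /wR hy; rewrite !par_desc_at.
have -> : (f x == f a) = (x == a) by apply/eqP/eqP => [/(injf _ hx)|->].
by case: (x == a) => //; exact: h4.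
Qed.

Lemma ball_iso_desc_at G o G' o' R f s k r u a : ball_iso G o G' o' R f ->
  parent_closed G -> parent_closed G' ->
  within G s o u -> anc G k u = Some a -> (s + k <= R)%N -> (s + r <= R)%N ->
  ball_iso (desc_at G a) u (desc_at G' (f a)) (f u) r f.
Proof.
move=> [g B] pc pc' hu hk skR srR.
by exists g; exact: ball_bij_desc_at B pc pc' hu hk skR srR.
Qed.

Lemma within_anc_top G r o v J a : within G r o v -> anc G J o = Some a ->
  (J <= r)%N -> (J = r \/ par G a = None) -> exists m, anc G m v = Some a.
Proof.
move=> /within_common_anc [i [m [c [im [hi hm]]]]] hJ Jr top.
case: (leqP i J) => iJ.
  exists (J - i + m)%N; rewrite ancD hm /=.
  by have := ancD G (J - i) i o; rewrite subnK // hi /= hJ.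
case: top => [eJ|top]; first lia.
by have := anc_above_top hJ top iJ; rewrite hi.
Qed.

(* Once the ancestral line of [o] is followed up [r] steps or to its top,
   the [r]-ball around [o] lies inside the descendant tree of the vertex
   reached. *)
Section DescAtTop.
Variables (G : rnet) (o r J a : nat).
Hypotheses (ac : acyclic G) (pc : parent_closed G) (vo : vset G o).
Hypotheses (hJ : anc G J o = Some a) (Jr : (J <= r)%N) (top : J = r \/ par G a = None).

Let is_desc_a v t : (t <= r)%N -> within G t o v -> exists m, anc G m v = Some a.
Proof. by move=> tr hv; apply: (within_anc_top (within_mono tr hv) hJ). Qed.

Lemma par_desc_at_top u v : within G r o u -> within G r o v ->
  (par G u = Some v <-> par (desc_at G a) u = Some v).
Proof.
move=> hu hv; rewrite par_desc_at; case: eqP => [->|//]; split=> // hp.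
have [m hm] := is_desc_a (leqnn r) hv.
by case: (par_not_desc ac (anc_vset pc vo hJ) hm hp).
Qed.

Lemma within_desc_at_top t v : (t <= r)%N -> within G t o v -> within (desc_at G a) t o v.
Proof.
elim: t v => [|t IH] v tr /=.
  by case=> -> _; split=> //; apply/vset_desc_at; split=> //; exists J.
case=> [h|[w [hw [vw [vv hp]]]]]; first by left; apply: IH => //; lia.
right; exists w; split; first by apply: IH => //; lia.
have wv : within G t.+1 o v by right; exists w; split=> //; split.
have wr : within G r o w by apply: within_mono hw; lia.
have vr : within G r o v by apply: within_mono wv.
split; first by apply/vset_desc_at; split=> //; exact: is_desc_a (leqnn r) wr.
split; first by apply/vset_desc_at; split=> //; exact: is_desc_a (leqnn r) vr.
by case: hp => hp; [left; apply/(par_desc_at_top wr vr)|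
                     right; apply/(par_desc_at_top vr wr)].
Qed.

Lemma ball_iso_desc_at_top H p f :
  ball_iso G o H p r f <-> ball_iso (desc_at G a) o H p r f.
Proof.
have eqw v : within G r o v <-> within (desc_at G a) r o v.
  by split; [exact: (within_desc_at_top (leqnn r))|exact: within_desc_at].
split; apply: ball_iso_congr.
- exact: eqw.
- exact: par_desc_at_top.
- by move=> v; apply: iff_sym.
- by move=> u v /eqw hu /eqw hv; apply: iff_sym (par_desc_at_top hu hv).
Qed.

End DescAtTop.

Lemma family_forest_reroot X u : family_forest X -> vset X u ->
  family_forest (reroot X u).
Proof.
by case=> vo pc ac lf vu; split=> // v k vv k0; rewrite anc_reroot; exact: ac.
Qed.

Lemma anc_desc_tree X k v w : anc (desc_tree X) k v = Some w -> anc X k v = Some w.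
Proof. by apply: anc_sub => x y /=; case: (x == root X). Qed.

Lemma anc_desc_tree_of_desc X k v w m : acyclic X -> vset X (root X) ->
  anc X k v = Some w -> anc X m w = Some (root X) -> anc (desc_tree X) k v = Some w.
Proof.
move=> ac vo; elim: k w m => [|k IH] w m //=.
case e: (anc X k v) => [b|] //= hb hm.
have hb' : anc X m.+1 b = Some (root X) by rewrite ancS hb.
rewrite (IH _ _ e hb') /=; case: eqP => [eb|//].
by exfalso; apply: (ac (root X) m.+1 vo) => //; rewrite -{1}eb.
Qed.

Lemma family_forest_desc X : family_forest X -> family_forest (desc_tree X).
Proof.
case=> vo pc ac lf; split; first by split=> //; exists 0%N.
- move=> v w /= [vv [k hk]]; case: eqP => // vo' hp; split; first exact: pc hp.
  exact: desc_par hk vo' hp.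
- by move=> v k /= [vv _] k0 /anc_desc_tree; apply: ac.
- move=> v [vv _]; apply: sub_finite_set (lf v vv) => w /= [[vw _]].
  by case: (w == root X).
Qed.

(** * Events along the ancestral line *)

Definition desc_ball_iso (H : rnet) r (G : rnet) a c :=
  exists f, ball_iso (desc_at G a) c H (root H) r f.

Definition anc_ball H r k (G : rnet) u :=
  anc G k (root G) = Some u /\ desc_ball_iso H r G u (root G).

Definition anc_parent_ball H r j (G : rnet) u := exists a,
  anc G j (root G) = Some a /\ par G a = Some u /\ desc_ball_iso H r G a (root G).

(* The transports of [anc_ball] and [anc_parent_ball] from the root to the
   ancestor; they only involve the descendant tree of the root. *)
Definition desc_ball H r k (T : rnet) u :=
  vset T u /\ anc T k u = Some (root T) /\ desc_ball_iso H r T (root T) u.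

Definition desc_child_ball H r j (T : rnet) u := vset T u /\ exists a,
  anc T j u = Some a /\ par T a = Some (root T) /\ desc_ball_iso H r T a u.

Lemma desc_ball_iso_desc_tree H r X a m c : acyclic X -> vset X (root X) ->
  anc X m a = Some (root X) ->
  desc_ball_iso H r X a c <-> desc_ball_iso H r (desc_tree X) a c.
Proof.
move=> ac vo hm.
have hv x : vset (desc_at X a) x <-> vset (desc_at (desc_tree X) a) x.
  rewrite !vset_desc_at /=; split.
    case=> vx [k hk]; split; first by split=> //; exists (m + k)%N; rewrite ancD hk.
    by exists k; exact: anc_desc_tree_of_desc hk hm.
  by case=> [[vx _] [k hk]]; split=> //; exists k; exact: anc_desc_tree.
have hp x : vset (desc_at X a) x -> par (desc_at X a) x = par (desc_at (desc_tree X) a) x.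
  move=> /vset_desc_at [vx [k hk]]; rewrite !par_desc_at /=.
  case: eqP => // xa; case: eqP => // xo; exfalso; subst x.
  have [mk0|mk] := posnP (m + k); last by apply: (ac _ _ vo mk); rewrite ancD hk.
  have k0 : k = 0%N by lia.
  by apply: xa; move: hk; rewrite k0 => -[].
have e f := @eq_ball_iso (desc_at X a) _ c H (root H) r f hv hp.
by split; case=> f hf; exists f; apply/e.
Qed.

Lemma anc_ball_reroot H r k X u : family_forest X -> vset X u ->
  anc_ball H r k (reroot X u) (root X) <-> desc_ball H r k (desc_tree X) u.
Proof.
case=> vo _ ac _ vu; rewrite /anc_ball /desc_ball /= anc_reroot.
have hD : desc_ball_iso H r X (root X) u <-> desc_ball_iso H r (desc_tree X) (root X) u.
  exact: (@desc_ball_iso_desc_tree H r X (root X) 0).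
split=> [[hk /hD hb]|[_ [hk /hD hb]]]; last by split=> //; exact: anc_desc_tree.
split; first by split=> //; exists k.
by split=> //; exact: anc_desc_tree_of_desc hk (_ : anc X 0 _ = _).
Qed.

Lemma anc_parent_ball_reroot H r j X u : family_forest X -> vset X u ->
  anc_parent_ball H r j (reroot X u) (root X) <-> desc_child_ball H r j (desc_tree X) u.
Proof.
case=> vo _ ac _ vu; rewrite /anc_parent_ball /desc_child_ball /=.
have hD a : par X a = Some (root X) ->
    desc_ball_iso H r X a u <-> desc_ball_iso H r (desc_tree X) a u.
  exact: (@desc_ball_iso_desc_tree H r X a 1).
split.
- case=> a [hj [pa /(hD a pa) hb]]; rewrite anc_reroot in hj.
  split; first by split=> //; exists j.+1; rewrite /= hj.
  exists a; split; first exact: anc_desc_tree_of_desc hj (_ : anc X 1 a = _).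
  split=> //; case: eqP => // ea; exfalso.
  by apply: (ac _ 1%N vo) => //=; rewrite -{1}ea.
- case=> _ [a [hj [pa hb]]].
  have pa' : par X a = Some (root X) by move: pa => /=; case: (a == root X).
  exists a; split; first by rewrite anc_reroot; exact: anc_desc_tree.
  by split=> //; apply/(hD a pa').
Qed.

Lemma anc_ball_uniq H r k X u u' : anc_ball H r k X u -> anc_ball H r k X u' -> u = u'.
Proof. by case=> h1 _ [h2 _]; move: h1; rewrite h2 => -[]. Qed.

Lemma anc_parent_ball_uniq H r j X u u' :
  anc_parent_ball H r j X u -> anc_parent_ball H r j X u' -> u = u'.
Proof.
case=> a [h1 [h2 _]] [a' [h1' [h2' _]]]; move: h1; rewrite h1' => -[ea].
by move: h2; rewrite -ea h2' => -[].
Qed.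

Definition local_rel N (P : rnet -> nat -> Prop) := forall G G' f g u,
  family_forest G -> family_forest G' -> ball_bij G (root G) G' (root G') N f g ->
  within G N (root G) u -> P G u -> P G' (f u).

Definition bounded_rel N (P : rnet -> nat -> Prop) := forall G u,
  family_forest G -> P G u -> within G N (root G) u.

Definition local_pred N (P : rnet -> Prop) := forall G G' f g,
  family_forest G -> family_forest G' -> ball_bij G (root G) G' (root G') N f g ->
  P G -> P G'.

Lemma local_pred_exists N P : local_rel N P -> bounded_rel N P ->
  local_pred N (fun G => exists u, P G u).
Proof.
move=> hl hb G G' f g wG wG' B [u hu]; exists (f u).
exact: hl B (hb _ _ wG hu) hu.
Qed.

Lemma desc_ball_iso_bij H r G o G' o' N f g s k c a : ball_bij G o G' o' N f g ->
  parent_closed G -> parent_closed G' ->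
  within G s o c -> anc G k c = Some a -> (s + k <= N)%N -> (s + r <= N)%N ->
  desc_ball_iso H r G a c -> desc_ball_iso H r G' (f a) (f c).
Proof.
move=> B pc pc' hc hk skN srN [f1 hf1].
have [f2 hf2] := ball_iso_sym (ball_iso_desc_at (ex_intro _ g B) pc pc' hc hk skN srN).
by exists (f1 \o f2); exact: ball_iso_comp hf2 hf1.
Qed.

Section Locality.
Variables (H : rnet) (r N : nat).

Lemma local_anc_ball k : (k <= N)%N -> (r <= N)%N -> local_rel N (anc_ball H r k).
Proof.
move=> kN rN G G' f g u wG wG' B _ [h1 h2].
have pc := forest_parent_closed wG; have pc' := forest_parent_closed wG'.
have h0 : within G 0 (root G) (root G) by split=> //; exact: forest_root.
split; rewrite -(ball_bij_center B).
  exact: ball_hom_anc (ball_bij_hom B) pc h0 _ h1.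
exact: desc_ball_iso_bij B pc pc' h0 h1 _ _ h2.
Qed.

Lemma bounded_anc_ball k : (k <= N)%N -> bounded_rel N (anc_ball H r k).
Proof.
move=> kN G u wG [h1 _]; apply: within_mono kN _.
exact: anc_within (forest_parent_closed wG) (forest_root wG) h1.
Qed.

Lemma local_anc_parent_ball j : (j.+1 <= N)%N -> (r <= N)%N ->
  local_rel N (anc_parent_ball H r j).
Proof.
move=> jN rN G G' f g u wG wG' B _ [a [h1 [h2 h3]]].
have pc := forest_parent_closed wG; have pc' := forest_parent_closed wG'.
have vo := forest_root wG.
have h0 : within G 0 (root G) (root G) by split.
have hu : anc G j.+1 (root G) = Some u by rewrite /= h1.
exists (f a); rewrite -(ball_bij_center B); split.
  by apply: ball_hom_anc (ball_bij_hom B) pc h0 _ h1; lia.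
split; last by apply: desc_ball_iso_bij B pc pc' h0 h1 _ _ h3; lia.
have wa : within G N (root G) a.
  by apply: (@within_mono _ j); [lia|exact: anc_within pc vo h1].
have wu : within G N (root G) u by apply: within_mono jN _; exact: anc_within pc vo hu.
by apply/(proj2 (proj2 (proj2 B)) a u wa wu).
Qed.

Lemma bounded_anc_parent_ball j : (j.+1 <= N)%N -> bounded_rel N (anc_parent_ball H r j).
Proof.
move=> jN G u wG [a [h1 [h2 _]]]; apply: within_mono jN _.
by apply: anc_within (forest_parent_closed wG) (forest_root wG) _; rewrite /= h1.
Qed.

Lemma local_desc_ball k : (k + k <= N)%N -> (k + r <= N)%N -> local_rel N (desc_ball H r k).
Proof.
move=> kN rN G G' f g u wG wG' B wu [_ [h1 h2]].
have pc := forest_parent_closed wG; have pc' := forest_parent_closed wG'.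
have hk : within G k (root G) u := within_sym (anc_within pc (within_vset wu) h1).
split; first exact: within_vset (proj1 (ball_bij_hom B) _ wu).
rewrite -(ball_bij_center B); split; first exact: ball_hom_anc (ball_bij_hom B) pc hk _ h1.
exact: desc_ball_iso_bij B pc pc' hk h1 _ _ h2.
Qed.

Lemma bounded_desc_ball k : (k <= N)%N -> bounded_rel N (desc_ball H r k).
Proof.
move=> kN G u wG [vu [h1 _]]; apply: within_mono kN _.
exact: within_sym (anc_within (forest_parent_closed wG) vu h1).
Qed.

Lemma local_desc_child_ball j : (j.+1 + j <= N)%N -> (j.+1 + r <= N)%N ->
  local_rel N (desc_child_ball H r j).
Proof.
move=> jN rN G G' f g u wG wG' B wu [vu [a [h1 [h2 h3]]]].
have pc := forest_parent_closed wG; have pc' := forest_parent_closed wG'.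
have hu1 : anc G j.+1 u = Some (root G) by rewrite /= h1.
have hk : within G j.+1 (root G) u := within_sym (anc_within pc vu hu1).
split; first exact: within_vset (proj1 (ball_bij_hom B) _ wu).
exists (f a); split; first by apply: ball_hom_anc (ball_bij_hom B) pc hk _ h1; lia.
split; last by apply: desc_ball_iso_bij B pc pc' hk h1 _ _ h3; lia.
have wa : within G N (root G) a.
  apply: (@within_mono _ (j.+1 + j)) => //; exact: within_trans hk (anc_within pc vu h1).
have wo : within G N (root G) (root G) by apply: within_refl; exact: forest_root.
by rewrite -(ball_bij_center B); apply/(proj2 (proj2 (proj2 B)) a (root G) wa wo).
Qed.

Lemma bounded_desc_child_ball j : (j.+1 <= N)%N -> bounded_rel N (desc_child_ball H r j).
Proof.
move=> jN G u wG [vu [a [h1 [h2 _]]]]; apply: within_mono jN _.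
by apply: within_sym (anc_within (forest_parent_closed wG) vu _); rewrite /= h1.
Qed.

End Locality.

Definition ball_event (H : rnet) r : set rnet :=
  [set G | exists f, ball_iso G (root G) H (root H) r f].

Lemma ball_event_desc_tree H s G :
  ball_event H s (desc_tree G) <-> desc_ball_iso H s G (root G) (root G).
Proof. by case: G. Qed.

Lemma local_ball_event_desc_tree H s N : (s <= N)%N ->
  local_pred N (fun G => ball_event H s (desc_tree G)).
Proof.
move=> sN G G' f g wG wG' B /ball_event_desc_tree h; apply/ball_event_desc_tree.
have h0 : within G 0 (root G) (root G) by split=> //; exact: forest_root.
rewrite -(ball_bij_center B).
exact: desc_ball_iso_bij B (forest_parent_closed wG) (forest_parent_closed wG') h0
  (_ : anc G 0 _ = _) _ sN h.
Qed.

Lemma finite_ball G o N : family_forest G -> finite_set [set v | within G N o v].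
Proof.
case=> _ pc _ lf; elim: N => [|N IH].
  by apply: (@sub_finite_set _ _ [set o]); [move=> v /= [->]|exact: finite_set1].
set B := [set v | within G N o v].
apply: (@sub_finite_set _ _ (B `|` ((fun w => odflt 0%N (par G w)) @` B `|`
   \bigcup_(w in B) [set v | vset G v /\ par G v = Some w]))).
  move=> v /= [hv|[w [hw [vw [vv hp]]]]]; first by left.
  right; case: hp => hp; first by left; exists w => //; rewrite hp.
  by right; exists w.
rewrite !finite_setU; split=> //; split; first exact: finite_image.
by apply: bigcup_finite => // w hw; apply: lf; exact: within_vset hw.
Qed.

(** * Local events are measurable *)

(* A finite rooted network, coded by its vertices, its (child, parent) edges
   and its root; there are countably many codes. *)
Definition code := (seq nat * seq (nat * nat) * nat)%type.

Definition net_of_code (c : code) : rnet :=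
  RNet [set v | v \in c.1.1] (fun v => ohead [seq q.2 | q <- c.1.2 & q.1 == v]) c.2.

Definition restrict_code (G : rnet) (s : seq nat) : code :=
  (s, [seq q <- [seq (x, y) | x <- s, y <- s] | par G q.1 == Some q.2], root G).

Lemma ohead_someP (l : seq nat) (P : nat -> Prop) y :
  (forall x, x \in l <-> P x) -> (forall x x', P x -> P x' -> x = x') ->
  ohead l = Some y <-> P y.
Proof.
move=> hl hf; case: l hl => [|x l] hl /=; first by split=> // /hl.
have Px : P x by apply/hl; rewrite inE eqxx.
by split=> [[<-] //|/(hf _ _ Px) ->].
Qed.

Lemma ohead_mem (l : seq nat) y : ohead l = Some y -> y \in l.
Proof. by case: l => //= x l [->]; rewrite inE eqxx. Qed.

Section RestrictCode.
Variables (G : rnet) (s : seq nat).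
Let D := net_of_code (restrict_code G s).

Lemma mem_par_restrict_code v x :
  x \in [seq q.2 | q <- (restrict_code G s).1.2 & q.1 == v] <->
  [/\ v \in s, x \in s & par G v = Some x].
Proof.
split.
  move=> /mapP [[a b]]; rewrite !mem_filter /= => /andP [/eqP ea /andP [hp hin]] ->.
  case/allpairsP: hin => [[a' b'] /= [ha hb [ea' eb']]].
  by subst; split=> //; move/eqP: hp.
case=> vs xs hp; apply/mapP; exists (v, x) => //.
by rewrite !mem_filter /= eqxx /= hp eqxx /=; apply/allpairsP; exists (v, x).
Qed.

Lemma par_restrict_code v y : v \in s ->
  par D v = Some y <-> y \in s /\ par G v = Some y.
Proof.
move=> vs; apply: (@ohead_someP _ (fun x => x \in s /\ par G v = Some x)).
  by move=> x; rewrite mem_par_restrict_code; split=> [[]|[]].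
by move=> x x' [_ ->] [_ [->]].
Qed.

Lemma par_restrict_codeP v y : par D v = Some y ->
  [/\ v \in s, y \in s & par G v = Some y].
Proof. by move=> /ohead_mem /mem_par_restrict_code. Qed.

End RestrictCode.

Lemma ball_code G N : family_forest G -> exists c : code, root (net_of_code c) = root G /\
  family_forest (net_of_code c) /\
  ball_bij G (root G) (net_of_code c) (root (net_of_code c)) N id id.
Proof.
move=> wG; case/finite_seqP: (finite_ball (root G) N wG) => s hs.
have pc := forest_parent_closed wG; have vo := forest_root wG.
set D := net_of_code (restrict_code G s).
have ins v : v \in s <-> within G N (root G) v.
  by have := congr1 (fun A => A v) hs => /= ->.
have sv v : v \in s -> vset G v by move=> /ins /within_vset.
have fwd t v : (t <= N)%N -> within G t (root G) v -> within D t (root G) v.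
  elim: t v => [|t IH] v tN /=.
    by case=> -> _; split=> //; apply/ins; exact: within_refl.
  case=> [h|[w [hw [vw [vv hp]]]]]; first by left; apply: IH => //; lia.
  have wt : within G t.+1 (root G) v by right; exists w; split=> //; split.
  have ws : w \in s by apply/ins; apply: within_mono hw; lia.
  have vs : v \in s by apply/ins; apply: within_mono wt.
  right; exists w; split; first by apply: IH => //; lia.
  by split=> //; split=> //; case: hp => hp; [left|right]; apply/par_restrict_code.
exists (restrict_code G s); split=> //; split.
  split=> //; first by apply/ins; exact: within_refl.
  - by move=> v w _ /par_restrict_codeP [].
  - move=> v k /= vs k0 hk; apply: (forest_acyclic wG (sv _ vs) k0).
    by move: hk; apply: anc_sub => x y /par_restrict_codeP [].
  - move=> v _; apply: (@sub_finite_set _ _ [set` s]); first by move=> w [].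
    by apply/finite_seqP; exists s.
split; first by move=> v hv; split=> //; exact: fwd.
split.
  move=> w hw; split=> //; move: hw; apply: within_subgraph; first by move=> x /sv.
  by move=> x y _ /par_restrict_codeP [].
split=> // u v hu hv; symmetry; apply: (iff_trans (par_restrict_code _ _ _)).
  exact/ins.
by split=> [[]|h] //; split=> //; apply/ins.
Qed.

HB.instance Definition _ := gen_eqMixin rnet.
HB.instance Definition _ := gen_choiceMixin rnet.
HB.instance Definition _ := isPointed.Build rnet (RNet set0 (fun _ => None) 0).

Lemma g_sigma_bigcup_countable (T : pointedType) (G : set (set T)) (I : countType)
  (P : set I) (F : I -> set T) :
  (forall i, P i -> <<s G >> (F i)) -> <<s G >> (\bigcup_(i in P) F i).
Proof.
move=> hF; rewrite bigcup_mkcond.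
apply: (@countable_bigcupT_measurable _ (g_sigma_algebraType G)) => [|i].
  exact: countableP.
case: ifPn => [/set_mem /hF //|_]; exact: (@measurable0 _ (g_sigma_algebraType G)).
Qed.

Definition ball_event2 (H : rnet) q r : set rnet2 :=
  [set x | within x.1 r (root x.1) x.2 /\
           exists f, ball_iso x.1 (root x.1) H (root H) r f /\ f x.2 = q].

Lemma ball_event_measurable H r : rnet_meas (ball_event H r).
Proof. by apply: sub_sigma_algebra; exists H, r. Qed.

Lemma ball_event2_measurable H q r : rnet2_meas (ball_event2 H q r).
Proof. by apply: sub_sigma_algebra; exists H, q, r. Qed.

Lemma g_sigma_const (T : pointedType) (G : set (set T)) (P : Prop) :
  <<s G >> [set _ : T | P].
Proof.
have [hP|hP] := pselect P.
  have -> : [set _ : T | P] = setT by apply/seteqP; split.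
  exact: (@measurableT _ (g_sigma_algebraType G)).
have -> : [set _ : T | P] = set0 by apply/seteqP; split.
exact: (@measurable0 _ (g_sigma_algebraType G)).
Qed.

Lemma local_rel_measurable N P : local_rel N P -> bounded_rel N P ->
  exists S, rnet2_meas S /\ forall x, family_forest x.1 -> (S x <-> P x.1 x.2).
Proof.
move=> hl hb.
exists (\bigcup_(c in [set c : code * nat |
           family_forest (net_of_code c.1) /\ P (net_of_code c.1) c.2])
          ball_event2 (net_of_code c.1) c.2 N).
split; first by apply: g_sigma_bigcup_countable => c _; exact: ball_event2_measurable.
move=> [G u] /= wG; split.
  case=> [[c q]] /= [wD Pq] [wu [f [[g B] fu]]].
  have [g' B'] := ball_bij_sym B.
  have := hl _ _ g' f q wD wG B' (hb _ _ wD Pq) Pq.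
  by rewrite -fu; case: B' => _ [/(_ u wu) [_ ->]].
move=> Pu; have wu := hb _ _ wG Pu.
have [c [_ [wD B]]] := ball_code N wG.
exists (c, u); first by split=> //; exact: hl G _ id id u wG wD B wu Pu.
by split=> //; exists id; split=> //; exists id.
Qed.

Lemma local_pred_measurable N P : local_pred N P ->
  exists A, rnet_meas A /\ forall G, family_forest G -> (A G <-> P G).
Proof.
move=> hl.
exists (\bigcup_(c in [set c : code | family_forest (net_of_code c) /\ P (net_of_code c)])
          ball_event (net_of_code c) N).
split; first by apply: g_sigma_bigcup_countable => c _; exact: ball_event_measurable.
move=> G wG; split.
  case=> c [wD Pc] [f [g B]].
  have [g' B'] := ball_bij_sym B.
  exact: hl _ _ g' f wD wG B' Pc.
move=> PG; have [c [_ [wD B]]] := ball_code N wG.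
by exists c; [split=> //; exact: hl _ _ _ _ wG wD B PG|exists id, id].
Qed.

Definition local_fun (R : realType) N (F : rnet -> \bar R) := forall G G' f g,
  family_forest G -> family_forest G' -> ball_bij G (root G) G' (root G') N f g ->
  F G = F G'.

Section LocalFunMeasurable.
Variables (R : realType) (N : nat) (F : rnet -> \bar R).
Hypothesis hF : local_fun N F.

Let coded G c := family_forest (net_of_code c) /\ ball_event (net_of_code c) N G.

Let Fc G := xget 0%E [set y | exists c, coded G c /\ y = F (net_of_code c)].

Let FcE G c : coded G c -> Fc G = F (net_of_code c).
Proof.
move=> gc; rewrite /Fc.
have /(xgetPex 0%E) [c' [gc' ->]] :
    exists y, [set y | exists c, coded G c /\ y = F (net_of_code c)] y.
  by exists (F (net_of_code c)), c.
case: gc gc' => [w1 [f1 [g1 B1]]] [w2 [f2 [g2 B2]]].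
have [h1 C1] := ball_bij_sym B2.
exact: hF w2 w1 (ball_bij_comp C1 B1).
Qed.

Let FcN G : ~ (exists c, coded G c) -> Fc G = 0%E.
Proof. by move=> nW; rewrite /Fc xgetPN // => y [c [gc _]]; apply: nW; exists c. Qed.

Lemma local_fun_measurable : exists F' : rnet -> \bar R,
  (forall B : set (\bar R), measurable B -> rnet_meas (F' @^-1` B)) /\
  (forall G, family_forest G -> F' G = F G) /\
  ((forall G, (0 <= F G)%E) -> forall G, (0 <= F' G)%E).
Proof.
exists Fc; split; last split.
- move=> B mB.
  pose coded_in Q := \bigcup_(c in [set c | family_forest (net_of_code c) /\ Q c])
                       ball_event (net_of_code c) N.
  have -> : Fc @^-1` B = coded_in (fun c => B (F (net_of_code c))) `|`
                         ([set _ | B 0%E] `&` ~` coded_in (fun=> True)).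
    apply/seteqP; split=> G /=.
      have [[c gc]|nW] := pselect (exists c, coded G c).
        by rewrite (FcE gc) => hB; left; case: gc => wc gc; exists c.
      by rewrite FcN // => hB; right; split=> // -[c [wc _] gc]; apply: nW; exists c.
    case=> [[c [wc hB] gc]|[hB nW]]; first by rewrite (FcE (conj wc gc)).
    by rewrite FcN // => -[c [wc gc]]; apply: nW; exists c.
  have mcoded Q : rnet_meas (coded_in Q).
    by apply: g_sigma_bigcup_countable => c _; exact: ball_event_measurable.
  apply: (@measurableU _ (g_sigma_algebraType rnet_gen)); first exact: mcoded.
  apply: (@measurableI _ (g_sigma_algebraType rnet_gen)); first exact: g_sigma_const.
  by apply: (@measurableC _ (g_sigma_algebraType rnet_gen)); exact: mcoded.
- move=> G wG; have [c [_ [wD B]]] := ball_code N wG.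
  rewrite (FcE (conj wD (ex_intro _ id (ex_intro _ id B)))).
  by apply/esym; exact: hF wG wD B.
- move=> F0 G; have [[c gc]|nW] := pselect (exists c, coded G c).
    by rewrite (FcE gc).
  by rewrite FcN.
Qed.

End LocalFunMeasurable.

Lemma desc_tree_measurable d (Om : measurableType d) (X : Om -> rnet) :
  (forall w, family_forest (X w)) -> (forall A, rnet_meas A -> measurable (X @^-1` A)) ->
  measurable_fun setT ((desc_tree \o X) : Om -> g_sigma_algebraType rnet_gen).
Proof.
move=> wX mX.
apply: (@measurability _ _ Om (g_sigma_algebraType rnet_gen) setT _ rnet_gen) => //.
move=> _ [B [H [s ->]] <-].
have [A [mA hA]] := local_pred_measurable (@local_ball_event_desc_tree H s s (leqnn s)).
rewrite setTI (_ : _ @^-1` _ = X @^-1` A); first exact: mX.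
by apply/seteqP; split=> w /= h; apply/(hA _ (wX w)).
Qed.

(** * Mass transport *)

Local Open Scope ereal_scope.

Definition iverson (R : realType) (P : Prop) : \bar R := if `[< P >] then 1 else 0.

Lemma iverson_ge0 (R : realType) P : 0 <= iverson R P.
Proof. by rewrite /iverson; case: asboolP. Qed.

Lemma eq_iverson (R : realType) (P Q : Prop) : (P <-> Q) -> iverson R P = iverson R Q.
Proof. by move=> /propext ->. Qed.

Lemma iversonE (R : realType) T (M : set T) x : iverson R (M x) = (\1_M x)%:E.
Proof.
by rewrite /iverson indicE; case: asboolP => h; [rewrite mem_set|rewrite memNset].
Qed.

Lemma esum_iverson (R : realType) (V P : set nat) :
  esum V (fun u => iverson R (P u)) = esum (V `&` P) (fun _ => 1).
Proof.
rewrite esum_mkcondr; apply: eq_esum => u _; rewrite /iverson.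
by case: asboolP => h; [rewrite mem_set|rewrite memNset].
Qed.

Lemma esum_iverson_uniq (R : realType) (V : set nat) (P : nat -> Prop) :
  (forall u u', P u -> P u' -> u = u') -> (forall u, P u -> V u) ->
  esum V (fun u => iverson R (P u)) = iverson R (exists u, P u).
Proof.
move=> un hV; rewrite esum_iverson /iverson; case: asboolP => [[u0 Pu0]|nP].
  have -> : V `&` P = [set u0].
    apply/seteqP; split=> u /=; first by case=> _ /(un _ _ Pu0) ->.
    by move=> ->; split=> //; exact: hV.
  by rewrite esum_set1.
have -> : V `&` P = set0 by apply/seteqP; split=> u // [_ Pu]; apply: nP; exists u.
exact: esum_set0.
Qed.

Lemma iverson_measurable (R : realType) (S : set rnet2) : rnet2_meas S ->
  forall B : set (\bar R), measurable B -> rnet2_meas ((fun x => iverson R (S x)) @^-1` B).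
Proof.
move=> mS B mB.
have -> : (fun x => iverson R (S x)) @^-1` B =
          ([set _ | B 1] `&` S) `|` ([set _ | B 0] `&` ~` S).
  apply/seteqP; split=> x /=; rewrite /iverson; case: asboolP => h.
  - by left.
  - by right.
  - by case=> [[]|[_]].
  - by case=> [[_]|[]].
apply: (@measurableU _ (g_sigma_algebraType rnet2_gen)).
  by apply: (@measurableI _ (g_sigma_algebraType rnet2_gen)); [exact: g_sigma_const|].
apply: (@measurableI _ (g_sigma_algebraType rnet2_gen)); first exact: g_sigma_const.
exact: (@measurableC _ (g_sigma_algebraType rnet2_gen)).
Qed.

Lemma local_fun_count (R : realType) N Q : local_rel N Q -> bounded_rel N Q ->
  local_fun N (fun T => esum (vset T) (fun u => iverson R (Q T u))).
Proof.
move=> hl hb G G' f g wG wG' B; rewrite !esum_iverson.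
rewrite (@reindex_esum R _ _ (vset G `&` Q G) (vset G' `&` Q G') f) //.
have [g' B'] := ball_bij_sym B.
split.
- move=> u [vu Qu]; have wu := hb _ _ wG Qu.
  split; last exact: hl B wu Qu.
  by case: B => /(_ u wu) [/within_vset].
- move=> u u' /set_mem [_ Qu] /set_mem [_ Qu'] e.
  case: B => /[dup] h1 /(_ u (hb _ _ wG Qu)) [_ <-].
  by rewrite e; case: (h1 u' (hb _ _ wG Qu')).
- move=> w [vw Qw]; have ww := hb _ _ wG' Qw.
  exists (g' w); last by case: B' => /(_ w ww) [].
  split; first by case: B' => /(_ w ww) [/within_vset].
  exact: hl B' ww Qw.
Qed.

Lemma mass_transport_iverson (R : realType) d (Om : measurableType d)
  (P : probability Om R) (X : Om -> rnet) N (Q : rnet -> nat -> Prop) :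
  unimodular_rft P X -> local_rel N Q -> bounded_rel N Q ->
  \int[P]_w esum (vset (X w)) (fun u => iverson R (Q (X w) u)) =
  \int[P]_w esum (vset (X w)) (fun u => iverson R (Q (reroot (X w) u) (root (X w)))).
Proof.
move=> [hFT [_ hU]] lQ bQ.
have [S [mS hS]] := local_rel_measurable lQ bQ.
have wX w := family_tree_forest (hFT w).
transitivity (\int[P]_w esum (vset (X w)) (fun u => iverson R (S (X w, u)))).
  apply: eq_integral => w _; apply: eq_esum => u _; apply: eq_iverson.
  by apply: iff_sym; exact: (hS (X w, u) (wX w)).
rewrite (hU _ (fun x => iverson_ge0 R (S x)) (iverson_measurable mS)).
apply: eq_integral => w _; apply: eq_esum => u vu; apply: eq_iverson.
exact: (hS (swap2 (X w, u)) (family_forest_reroot (wX w) vu)).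
Qed.

Lemma ge0_integral_comp_eq_law (R : realType) d1 d2 d (Om1 : measurableType d1)
  (Om2 : measurableType d2) (T : measurableType d)
  (mu1 : measure Om1 R) (mu2 : measure Om2 R)
  (Z1 : Om1 -> T) (Z2 : Om2 -> T) (F : T -> \bar R) :
  measurable_fun setT Z1 -> measurable_fun setT Z2 ->
  (forall A, measurable A -> mu1 (Z1 @^-1` A) = mu2 (Z2 @^-1` A)) ->
  measurable_fun setT F -> (forall x, 0 <= F x) ->
  \int[mu1]_w F (Z1 w) = \int[mu2]_w F (Z2 w).
Proof.
move=> m1 m2 e mF F0.
have -> : \int[mu1]_w F (Z1 w) = \int[pushforward mu1 Z1]_y F y.
  by rewrite ge0_integral_pushforward.
have -> : \int[mu2]_w F (Z2 w) = \int[pushforward mu2 Z2]_y F y.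
  by rewrite ge0_integral_pushforward.
by apply: eq_measure_integral => A mA _; exact: e.
Qed.

Lemma prob_iverson (R : realType) d (Om : measurableType d) (P : probability Om R)
  (X : Om -> rnet) (M : set rnet) :
  measurable (X @^-1` M) -> P (X @^-1` M) = \int[P]_w iverson R (M (X w)).
Proof.
move=> mM; rewrite -[X @^-1` M]setIT -integral_indic; [|exact: measurableT|exact: mM].
by apply: eq_integral => w _; rewrite -iversonE.
Qed.

Section DescDeterminesEvent.
Variables (R : realType) (N : nat) (Q Qd : rnet -> nat -> Prop).
Hypotheses (lQ : local_rel N Q) (bQ : bounded_rel N Q).
Hypotheses (lQd : local_rel N Qd) (bQd : bounded_rel N Qd).
Hypothesis Q_reroot : forall X u, family_forest X -> vset X u ->
  (Q (reroot X u) (root X) <-> Qd (desc_tree X) u).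
Hypothesis Q_uniq : forall X u u', Q X u -> Q X u' -> u = u'.

(* Mass transport from the root to the vertex it is [Q]-related to. *)
Lemma prob_exists_eq_integral_desc d (Om : measurableType d) (P : probability Om R)
  (X : Om -> rnet) (A : set rnet) (Psi : rnet -> \bar R) :
  unimodular_rft P X -> rnet_meas A ->
  (forall G, family_forest G -> (A G <-> exists u, Q G u)) ->
  (forall G, family_forest G -> Psi G = esum (vset G) (fun u => iverson R (Qd G u))) ->
  P (X @^-1` A) = \int[P]_w Psi (desc_tree (X w)).
Proof.
move=> U mA hA hPsi; have [hFT [hX _]] := U.
have wX w := family_tree_forest (hFT w).
rewrite prob_iverson; last exact: hX.
transitivity (\int[P]_w esum (vset (X w)) (fun u => iverson R (Q (X w) u))).
  apply: eq_integral => w _; rewrite esum_iverson_uniq.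
  - exact/eq_iverson/hA/wX.
  - exact: Q_uniq.
  - by move=> u /(bQ (wX w)) /within_vset.
rewrite (mass_transport_iverson U lQ bQ); apply: eq_integral => w _.
have wD := family_forest_desc (wX w).
rewrite hPsi // !esum_iverson; congr esum; apply/seteqP; split=> u /=.
  by case=> vu /(Q_reroot (wX w) vu) h; split=> //; exact: within_vset (bQd wD h).
case=> vu h; have vu' : vset (X w) u by case: vu.
by split=> //; apply/(Q_reroot (wX w) vu').
Qed.

Lemma prob_exists_eq_of_desc_law d1 d2 (Om1 : measurableType d1)
  (Om2 : measurableType d2) (P1 : probability Om1 R) (P2 : probability Om2 R)
  (X1 : Om1 -> rnet) (X2 : Om2 -> rnet) :
  unimodular_rft P1 X1 -> unimodular_rft P2 X2 ->
  (forall A, rnet_meas A ->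
     P1 ((desc_tree \o X1) @^-1` A) = P2 ((desc_tree \o X2) @^-1` A)) ->
  exists A, rnet_meas A /\ (forall G, family_forest G -> (A G <-> exists u, Q G u)) /\
    P1 (X1 @^-1` A) = P2 (X2 @^-1` A).
Proof.
move=> U1 U2 hD.
have [A [mA hA]] := local_pred_measurable (local_pred_exists lQ bQ).
have [Psi [mPsi [hPsi Psi0]]] := local_fun_measurable (local_fun_count R lQd bQd).
exists A; split=> //; split=> //.
rewrite (prob_exists_eq_integral_desc U1 mA hA hPsi).
rewrite (prob_exists_eq_integral_desc U2 mA hA hPsi).
have mD d (Om : measurableType d) (P : probability Om R) X : unimodular_rft P X ->
    measurable_fun setT ((desc_tree \o X) : Om -> g_sigma_algebraType rnet_gen).
  by case=> hFT [hX _]; apply: desc_tree_measurable => // w; exact: family_tree_forest.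
apply: (ge0_integral_comp_eq_law (mD _ _ _ _ U1) (mD _ _ _ _ U2) hD).
- by move=> _ B mB; rewrite setTI; exact: mPsi.
- by apply: Psi0 => G; apply: esum_ge0 => u _; exact: iverson_ge0.
Qed.

End DescDeterminesEvent.

(** * Telescoping along the ancestral line *)

Section BallTelescope.
Variables (R : realType) (H : rnet) (r : nat) (X : rnet).
Hypothesis wX : family_forest X.

Let o := root X.
Let e k := iverson R (exists u, anc_ball H r k X u).
Let c j := iverson R (exists u, anc_parent_ball H r j X u).
Let iso_at a := iverson R (desc_ball_iso H r X a o).

Let eS k a : anc X k o = Some a -> e k = iso_at a.
Proof.
move=> h; apply: eq_iverson; split=> [[u [h1 h2]]|hE]; last by exists a.
by move: h1; rewrite h => -[->].
Qed.

Let eN k : anc X k o = None -> e k = 0.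
Proof. by move=> h; rewrite /e /iverson asboolF // => -[u [h1 _]]; rewrite h in h1. Qed.

Let cS j a b : anc X j o = Some a -> par X a = Some b -> c j = iso_at a.
Proof.
move=> h hp; apply: eq_iverson; split=> [[u [a' [h1 [_ h3]]]]|hE]; last by exists b, a.
by move: h1; rewrite h => -[->].
Qed.

Let cN j : (forall a, anc X j o = Some a -> par X a = None) -> c j = 0.
Proof.
move=> hN; rewrite /c /iverson asboolF // => -[u [a [h1 [h2 _]]]].
by rewrite hN in h2.
Qed.

(* [c j = e j] unless the [j]-th ancestor is the top of the ancestral line,
   where [c j = 0]: the sums telescope to the term of the top of the line cut
   at height [r]. *)
Let partial_sums n : (n <= r)%N -> exists J a, [/\ (J <= n)%N, anc X J o = Some a,
  J = n \/ par X a = None &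
  \sum_(0 <= k < n.+1) e k = \sum_(0 <= j < n) c j + iso_at a].
Proof.
elim: n => [|n IH] nr.
  by exists 0%N, o; split=> //; [left|rewrite big_nat1 big_geq // add0e (@eS 0 o)].
have [J [a [Jn hJ top hsum]]] := IH (ltnW nr).
rewrite big_nat_recr //= hsum big_nat_recr //=.
have above_top : par X a = None -> (J <= n)%N -> e n.+1 = 0 /\ c n = 0.
  move=> pa Jn'; split; first by apply/eN/(anc_above_top hJ pa); lia.
  apply: cN => a' h; case: (eqVneq J n) => [eJ|nJ].
    by move: h; rewrite -eJ hJ => -[<-].
  by rewrite (anc_above_top hJ pa) in h; last lia.
case: top => [eJ|pa]; last first.
  have [-> ->] := above_top pa Jn.
  by exists J, a; split; [exact: leqW|exact: hJ|right|rewrite !adde0].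
subst J; case ep: (par X a) => [b|]; last first.
  have [-> ->] := above_top ep (leqnn n).
  by exists n, a; split; [exact: leqW|exact: hJ|right|rewrite !adde0].
have hb : anc X n.+1 o = Some b by rewrite /= hJ /= ep.
by exists n.+1, b; split; [|exact: hb|left|rewrite (eS hb) (cS hJ ep)].
Qed.

Lemma ball_event_telescope :
  iverson R (ball_event H r X) +
    \sum_(0 <= j < r) iverson R (exists u, anc_parent_ball H r j X u) =
  \sum_(0 <= k < r.+1) iverson R (exists u, anc_ball H r k X u).
Proof.
have [J [a [Jr hJ top ->]]] := partial_sums (leqnn r).
rewrite addeC; congr (_ + _); apply: eq_iverson.
have hT := ball_iso_desc_at_top (forest_acyclic wX) (forest_parent_closed wX)
  (forest_root wX) hJ Jr top H (root H).
by split; case=> f hf; exists f; apply/hT.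
Qed.

End BallTelescope.

Lemma prob_ball_event_telescope (R : realType) d (Om : measurableType d)
  (P : probability Om R) (X : Om -> rnet) H r (A B : nat -> set rnet) :
  unimodular_rft P X ->
  (forall k, rnet_meas (A k) /\
     forall G, family_forest G -> (A k G <-> exists u, anc_ball H r k G u)) ->
  (forall j, rnet_meas (B j) /\
     forall G, family_forest G -> (B j G <-> exists u, anc_parent_ball H r j G u)) ->
  P (X @^-1` ball_event H r) + \sum_(0 <= j < r) P (X @^-1` B j) =
  \sum_(0 <= k < r.+1) P (X @^-1` A k).
Proof.
move=> [hFT [hX _]] hA hB.
have wX w := family_tree_forest (hFT w).
pose B' j := if j == r then ball_event H r else B j.
have mB' j : rnet_meas (B' j).
  by rewrite /B'; case: eqP => _; [exact: ball_event_measurable|case: (hB j)].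
have sum_int (M : nat -> set rnet) n : (forall k, rnet_meas (M k)) ->
    \sum_(0 <= k < n) P (X @^-1` M k) = \int[P]_w \sum_(0 <= k < n) iverson R (M k (X w)).
  move=> mM; rewrite ge0_integral_sum //.
  - by apply: eq_bigr => k _; exact: prob_iverson (hX _ (mM k)).
  - move=> k; rewrite (_ : (fun w => _) = fun w => (\1_(X @^-1` M k) w)%:E).
      by apply/measurable_EFinP; apply: measurable_indic; exact: hX.
    by apply/funext => w; exact: (iversonE R (X @^-1` M k) w).
  - by move=> k w _; exact: iverson_ge0.
have -> : P (X @^-1` ball_event H r) + \sum_(0 <= j < r) P (X @^-1` B j) =
          \sum_(0 <= j < r.+1) P (X @^-1` B' j).
  rewrite big_nat_recr //= addeC /B' eqxx; congr (_ + _).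
  by apply: eq_big_nat => j /andP [_ jr]; rewrite ifN // neq_ltn jr.
rewrite !sum_int //; last by move=> k; case: (hA k).
apply: eq_integral => w _.
transitivity (iverson R (ball_event H r (X w)) +
    \sum_(0 <= j < r) iverson R (exists u, anc_parent_ball H r j (X w) u)).
  rewrite big_nat_recr //= addeC /B' eqxx; congr (_ + _).
  apply: eq_big_nat => j /andP [_ jr]; rewrite ifN ?neq_ltn ?jr //.
  by apply: eq_iverson; exact: (proj2 (hB j) _ (wX w)).
rewrite ball_event_telescope //; apply: eq_bigr => k _; apply: eq_iverson.
by apply: iff_sym; exact: (proj2 (hA k) _ (wX w)).
Qed.

(** * The law of D(o) determines the ball events *)

Section AncestorEvents.
Variables (R : realType) (d1 d2 : measure_display).
Variables (Om1 : measurableType d1) (Om2 : measurableType d2).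
Variables (P1 : probability Om1 R) (P2 : probability Om2 R).
Variables (X1 : Om1 -> rnet) (X2 : Om2 -> rnet) (H : rnet) (r : nat).

Lemma anc_ball_event_law_eq k :
  unimodular_rft P1 X1 -> unimodular_rft P2 X2 ->
  (forall A, rnet_meas A ->
     P1 ((desc_tree \o X1) @^-1` A) = P2 ((desc_tree \o X2) @^-1` A)) ->
  exists A, rnet_meas A /\
    (forall G, family_forest G -> (A G <-> exists u, anc_ball H r k G u)) /\
    P1 (X1 @^-1` A) = P2 (X2 @^-1` A).
Proof.
apply: (prob_exists_eq_of_desc_law (N := k + k + r) (Qd := desc_ball H r k)).
- by apply: local_anc_ball; lia.
- by apply: bounded_anc_ball; lia.
- by apply: local_desc_ball; lia.
- by apply: bounded_desc_ball; lia.
- exact: anc_ball_reroot.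
- exact: anc_ball_uniq.
Qed.

Lemma anc_parent_ball_event_law_eq j :
  unimodular_rft P1 X1 -> unimodular_rft P2 X2 ->
  (forall A, rnet_meas A ->
     P1 ((desc_tree \o X1) @^-1` A) = P2 ((desc_tree \o X2) @^-1` A)) ->
  exists B, rnet_meas B /\
    (forall G, family_forest G -> (B G <-> exists u, anc_parent_ball H r j G u)) /\
    P1 (X1 @^-1` B) = P2 (X2 @^-1` B).
Proof.
apply: (prob_exists_eq_of_desc_law (N := j.+1 + j.+1 + r) (Qd := desc_child_ball H r j)).
- by apply: local_anc_parent_ball; lia.
- by apply: bounded_anc_parent_ball; lia.
- by apply: local_desc_child_ball; lia.
- by apply: bounded_desc_child_ball; lia.
- exact: anc_parent_ball_reroot.
- exact: anc_parent_ball_uniq.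
Qed.

End AncestorEvents.

Lemma ball_event_prob_eq (R : realType) d1 d2 (Om1 : measurableType d1)
  (Om2 : measurableType d2) (P1 : probability Om1 R) (P2 : probability Om2 R)
  (X1 : Om1 -> rnet) (X2 : Om2 -> rnet) :
  unimodular_rft P1 X1 -> unimodular_rft P2 X2 ->
  (forall A, rnet_meas A ->
     P1 ((desc_tree \o X1) @^-1` A) = P2 ((desc_tree \o X2) @^-1` A)) ->
  forall H r, P1 (X1 @^-1` ball_event H r) = P2 (X2 @^-1` ball_event H r).
Proof.
move=> U1 U2 hD H r.
have /choice [A hA] := fun k => anc_ball_event_law_eq H r k U1 U2 hD.
have /choice [B hB] := fun j => anc_parent_ball_event_law_eq H r j U1 U2 hD.
have hA' k := conj (hA k).1 (hA k).2.1.
have hB' j := conj (hB j).1 (hB j).2.1.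
have e1 := prob_ball_event_telescope U1 hA' hB'.
have e2 := prob_ball_event_telescope U2 hA' hB'.
have sA : \sum_(0 <= k < r.+1) P1 (X1 @^-1` A k) = \sum_(0 <= k < r.+1) P2 (X2 @^-1` A k).
  by apply: eq_bigr => k _; case: (hA k) => _ [].
have sB : \sum_(0 <= j < r) P1 (X1 @^-1` B j) = \sum_(0 <= j < r) P2 (X2 @^-1` B j).
  by apply: eq_bigr => j _; case: (hB j) => _ [].
have fin : \sum_(0 <= j < r) P2 (X2 @^-1` B j) \is a fin_num.
  apply/sum_fin_numP => j _ _; apply: fin_num_measure.
  by case: U2 => _ [hX _]; apply: hX; case: (hB j).
move: e1; rewrite sA sB -e2 => /(congr1 (fun z => z - \sum_(0 <= j < r) P2 (X2 @^-1` B j))).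
by rewrite /= !addeK.
Qed.

(** * Ball events determine the law *)

(* The [r]-ball of a network is determined by its [s]-ball. *)
Lemma ball_event_setI H K r s : (r <= s)%N ->
  ball_event H r `&` ball_event K s = set0 \/
  ball_event H r `&` ball_event K s = ball_event K s.
Proof.
move=> rs.
have [[G0 [[f0 h0] [f1 h1]]]|none] := pselect (ball_event H r `&` ball_event K s !=set0).
  right; apply/seteqP; split=> G1; first by case.
  move=> [f2 h2]; split; last by exists f2.
  have [f3 h3] := ball_iso_sym h1.
  have h4 := ball_iso_restrict rs (ball_iso_comp h2 h3).
  by exists (f0 \o (f3 \o f2)); exact: ball_iso_comp h4 h0.
by left; apply/seteqP; split=> // G1 h; apply: none; exists G1.
Qed.

Lemma law_eq_of_ball_events (R : realType) d1 d2 (Om1 : measurableType d1)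
  (Om2 : measurableType d2) (P1 : probability Om1 R) (P2 : probability Om2 R)
  (X1 : Om1 -> rnet) (X2 : Om2 -> rnet) :
  (forall A, rnet_meas A -> measurable (X1 @^-1` A)) ->
  (forall A, rnet_meas A -> measurable (X2 @^-1` A)) ->
  (forall H r, P1 (X1 @^-1` ball_event H r) = P2 (X2 @^-1` ball_event H r)) ->
  forall A, rnet_meas A -> P1 (X1 @^-1` A) = P2 (X2 @^-1` A).
Proof.
move=> hX1 hX2 hg.
pose T := g_sigma_algebraType rnet_gen.
have mX1 : measurable_fun setT (X1 : Om1 -> T) by move=> _ B mB; rewrite setTI; exact: hX1.
have mX2 : measurable_fun setT (X2 : Om2 -> T) by move=> _ B mB; rewrite setTI; exact: hX2.
pose G := [set A : set T | rnet_gen A \/ A = set0 \/ A = setT].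
have Gm : G `<=` measurable.
  move=> A [hA|[->|->]]; last exact: measurableT.
  - exact: sub_sigma_algebra.
  - exact: measurable0.
have setIG : setI_closed G.
  move=> _ _ [[H [r ->]]|[->|->]] [[K [s ->]]|[->|->]];
    rewrite ?setI0 ?set0I ?setIT ?setTI;
    try by [right; left|right; right|left; exists H, r|left; exists K, s].
  case: (leqP r s) => [rs|/ltnW sr].
    by case: (ball_event_setI H K rs) => ->; [right; left|left; exists K, s].
  by rewrite setIC; case: (ball_event_setI K H sr) => ->; [right; left|left; exists H, r].
have m1m2 A : G A -> pushforward P1 (X1 : Om1 -> T) A = pushforward P2 (X2 : Om2 -> T) A.
  case=> [[H [r ->]]|[->|->]]; rewrite /pushforward.
  - exact: hg.
  - by rewrite !preimage_set0 !measure0.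
  - by rewrite !preimage_setT !probability_setT.
move=> A mA.
have := @g_sigma_algebra_measure_unique _ R T G Gm (fun=> setT)
  (fun _ => or_intror (or_intror erefl)) _ (pushforward P1 (X1 : Om1 -> T))
  (pushforward P2 (X2 : Om2 -> T)) setIG m1m2 _ A.
rewrite /pushforward; apply; try exact: mX1; try exact: mX2.
- by apply/seteqP; split=> // x _; exists 0%N.
- by move=> k /=; change (P1 [set: Om1] < +oo); rewrite probability_setT ltey.
- by apply: (sub_sigma_algebra2 (M := rnet_gen)) => // B hB; left.
Qed.

Unset Implicit Arguments.

Theorem lemma4p18 (R : realType) (d1 d2 : measure_display)
  (Omega1 : measurableType d1) (Omega2 : measurableType d2)
  (P1 : probability Omega1 R) (P2 : probability Omega2 R)
  (X1 : Omega1 -> rnet) (X2 : Omega2 -> rnet) :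
  unimodular_rft P1 X1 -> unimodular_rft P2 X2 ->
  (forall A, rnet_meas A ->
     P1 ((desc_tree \o X1) @^-1` A) = P2 ((desc_tree \o X2) @^-1` A)) ->
  forall A, rnet_meas A -> P1 (X1 @^-1` A) = P2 (X2 @^-1` A).
Proof.
move=> U1 U2 hD.
apply: law_eq_of_ball_events; [by case: U1 => _ []|by case: U2 => _ []|].
exact: ball_event_prob_eq U1 U2 hD.
Qed.
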